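(* Let $n\ge1$, and let $\epsilon=1$ if $n$ is odd and $\epsilon=0$ if $n$ is even. The Pontrjagin classes $p_i(V_1\oplus V_2)$ for $1\le i\le n-\epsilon$ are algebraically independent in $H^*(BSO(n)\times BSO(n);\mathbb{Q})$.
   Context: $V_1\oplus V_2$ denotes the rank $2n$ vector bundle over $BSO(n)\times BSO(n)$ which is the external direct sum of the tautological bundles of the two factors (equivalently, associated to the representation $V_1\oplus V_2$ of $SO(n)\times SO(n)$, where $V_i$ is the standard representation of the $i$-th factor with the other factor acting trivially). *)

From mathcomp Require Import all_boot all_algebra.
From mathcomp Require Import mpoly.
Set Implicit Arguments. Unset Strict Implicit. Unset Printing Implicit Defensive.
Import GRing.Theory.
Local Open Scope ring_scope.

(* Algebraic model of H^*(BSO(n) x BSO(n); Q), k := n./2 :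
   - n = 2k+1 : H^*(BSO(n);Q) = Q[p_1,...,p_k]
   - n = 2k   : H^*(BSO(n);Q) = Q[p_1,...,p_{k-1}, e], with p_k = e^2.
   In both cases it is a polynomial ring in k generators; the product
   BSO(n) x BSO(n) has (Kunneth) the polynomial ring in k + k generators,
   the first k coming from the first factor (lshift) and the last k from the
   second factor (rshift).  Generator j : 'I_k of a factor is p_(j+1), except
   for n even and j+1 = k where it is the Euler class e. *)
Definition Hring (n : nat) := {mpoly rat[n./2 + n./2]}.

Definition pont (n : nat) (side : 'I_(n./2) -> 'I_(n./2 + n./2)) (i : nat)
  : Hring n :=
  if i == 0%N then 1 else
  \sum_(j < n./2 | j.+1 == i)
     (if ~~ odd n && (j.+1 == n./2) then 'X_(side j) ^+ 2 else 'X_(side j)).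

Definition pont1 (n : nat) (i : nat) : Hring n := @pont n (fun j => lshift n./2 j) i.
Definition pont2 (n : nat) (i : nat) : Hring n := @pont n (fun j => rshift n./2 j) i.

(* Whitney sum formula (valid rationally):  p(V1 (+) V2) = p(V1) p(V2). *)
Definition pont_sum (n : nat) (i : nat) : Hring n :=
  \sum_(a < i.+1) pont1 n a * pont2 n (i - a).

Definition alg_indep (m k : nat) (t : m.-tuple {mpoly rat[k]}) : Prop :=
  forall P : {mpoly rat[m]}, P \mPo t = 0 -> P = 0.

From mathcomp Require Import all_boot all_algebra.
From mathcomp Require Import mpoly.
Set Implicit Arguments. Unset Strict Implicit. Unset Printing Implicit Defensive.
Import GRing.Theory.
Local Open Scope ring_scope.

(* Write k = n/2 and let x_1..x_k, y_1..y_k be the generators of the two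
   factors, so that p(V_1 (+) V_2) = (1 + x_1 + ... + x_k)(1 + y_1 + ... + y_k),
   except that for n even x_k and y_k enter squared (p_k = e^2).  Substituting
   x_k -> x_k^2, y_k -> y_k^2 maps distinct monomials to distinct monomials, so
   it suffices to treat the unsquared product.  Substituting there x_a by the
   a-th elementary symmetric polynomial in k fresh variables, and y_b likewise
   in k others, turns the product into the product of the (1 + z_j) over 2k
   variables: p_i(V_1 (+) V_2) becomes the i-th elementary symmetric polynomial
   in 2k variables, and these are algebraically independent. *)

Section Convolution.
Variables (R : pzSemiRingType) (T1 T2 : finType).

Lemma sum_convolution (c1 : T1 -> nat) (c2 : T2 -> nat) (f : T1 -> R) (g : T2 -> R) i :
  \sum_(a < i.+1) (\sum_(x | c1 x == a) f x) * (\sum_(y | c2 y == (i - a)%N) g y)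
  = \sum_(p | (c1 p.1 + c2 p.2 == i)%N) f p.1 * g p.2.
Proof.
have sum_diagonal (u v : nat) (z : R) :
    \sum_(a < i.+1) (if (u == a) && (v == i - a)%N then z else 0)
    = if (u + v == i)%N then z else 0.
  have [uvi | /negP uvi] := eqVneq (u + v)%N i.
    have ltui : (u < i.+1)%N by rewrite ltnS -uvi leq_addr.
    rewrite (bigD1 (Ordinal ltui)) //= eqxx -[X in (X - u)%N]uvi addKn eqxx big1 ?addr0 // => a.
    by rewrite -val_eqE /= eq_sym => /negbTE ->.
  rewrite big1 // => a _; case: eqP => // ua; case: eqP => // va; exfalso.
  by apply: uvi; rewrite ua va subnKC // -ltnS.
have distr (a : 'I_i.+1) :
    (\sum_(x | c1 x == a) f x) * (\sum_(y | c2 y == (i - a)%N) g y)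
    = \sum_x \sum_y (if (c1 x == a) && (c2 y == (i - a)%N) then f x * g y else 0).
  rewrite big_distrlr big_mkcond /=; apply: eq_bigr => x _.
  by case: eqP => _ /=; [rewrite big_mkcond | rewrite big1].
rewrite [RHS]big_mkcond.
rewrite -(pair_bigA _ (fun x y => if (c1 x + c2 y == i)%N then f x * g y else 0)) /=.
under eq_bigr do rewrite distr.
rewrite exchange_big /=; apply: eq_bigr => x _.
rewrite exchange_big /=; apply: eq_bigr => y _.
exact: sum_diagonal.
Qed.

End Convolution.

Section MPolyComp.
Variable R : comNzRingType.

Lemma comp_mpolyA (m k l : nat) (p : {mpoly R[m]}) (t : m.-tuple {mpoly R[k]})
    (u : k.-tuple {mpoly R[l]}) :
  (p \mPo t) \mPo u = p \mPo [tuple tnth t i \mPo u | i < m].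
Proof.
rewrite [p \mPo t]comp_mpolyE [RHS]comp_mpolyE raddf_sum /=; apply: eq_bigr => mm _.
rewrite linearZ /= rmorph_prod /=; congr (_ *: _); apply: eq_bigr => i _.
by rewrite rmorphXn /= tnth_mktuple.
Qed.

(* The substitution sends 'X_[mm] to 'X_[D mm] with D injective, so the leading
   coefficient of p survives. *)
Lemma comp_mpoly_powX_eq0 (m : nat) (d : 'I_m -> nat) (p : {mpoly R[m]}) :
    (forall j, 0 < d j)%N ->
  p \mPo [tuple 'X_j ^+ d j | j < m] = 0 -> p = 0.
Proof.
move=> d_gt0 p0; pose D (mm : 'X_{1..m}) := [multinom (d j * mm j)%N | j < m].
have D_inj : injective D.
  move=> m1 m2 /(congr1 (fun mm : 'X_{1..m} => mm _)) eqD; apply/mnmP => j.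
  by apply/eqP; have /eqP := eqD j; rewrite !mnmE eqn_mul2l eqn0Ngt d_gt0.
have compX mm : 'X_[mm] \mPo [tuple 'X_j ^+ d j | j < m] = 'X_[D mm].
  rewrite comp_mpolyX; under eq_bigr do rewrite tnth_mktuple -exprM.
  rewrite mprodXnE; congr 'X_[_]; apply/mnmP => j.
  rewrite mnm_sumE mnmE (bigD1 j) //= big1 => [|i /negbTE ne].
    by rewrite mulmnE mnm1E eqxx mul1n addn0.
  by rewrite mulmnE mnm1E ne mul0n.
apply/eqP; apply/contraT => p_neq0; have lead_in := mlead_supp p_neq0.
have := congr1 (mcoeff (D (mlead p))) p0.
rewrite comp_mpolyEX mcoeff0 raddf_sum /= (bigD1_seq (mlead p)) ?msupp_uniq //=.
rewrite mcoeffZ compX mcoeffX eqxx mulr1 big1_seq ?addr0.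
  by move=> /eqP; rewrite mcoeff_eq0 lead_in.
move=> mm /andP[ne _]; rewrite mcoeffZ compX mcoeffX.
by rewrite (inj_eq D_inj) (negbTE ne) mulr0.
Qed.

End MPolyComp.

Lemma split_lshift (k l : nat) (a : 'I_k) : split (lshift l a) = inl a.
Proof. exact: (unsplitK (inl _ a)). Qed.

Lemma split_rshift (k l : nat) (b : 'I_l) : split (rshift k b) = inr b.
Proof. exact: (unsplitK (inr _ b)). Qed.

Section ElementarySymmetricSplit.
Variable R : comNzRingType.

Definition mesym_on (k m : nat) (v : 'I_k -> 'I_m) (a : nat) : {mpoly R[m]} :=
  \sum_(h : {set 'I_k} | #|h| == a) \prod_(i in h) 'X_(v i).

Lemma mesym_on0 (k m : nat) (v : 'I_k -> 'I_m) : mesym_on v 0 = 1.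
Proof.
rewrite /mesym_on (eq_bigl (pred1 set0)) ?big_pred1_eq ?big_set0 // => h.
by rewrite /= cards_eq0.
Qed.

Lemma mesym_on_geqnE (k m : nat) (v : 'I_k -> 'I_m) (a : nat) :
  (k < a)%N -> mesym_on v a = 0.
Proof.
move=> lt_ka; rewrite /mesym_on big_pred0 // => h; apply/negbTE.
by rewrite neq_ltn (leq_ltn_trans _ lt_ka) // -[leqRHS]card_ord max_card.
Qed.

Variables k l : nat.

Definition join_sets (p : {set 'I_k} * {set 'I_l}) : {set 'I_(k + l)} :=
  [set j | match split j with inl a => a \in p.1 | inr b => b \in p.2 end].

Lemma join_sets_bij : bijective join_sets.
Proof.
apply: (@Bijective _ _ _ (fun h : {set 'I_(k + l)} =>
  ([set a | lshift l a \in h], [set b | rshift k b \in h]))).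
  by case=> A B; congr pair; apply/setP => j; rewrite !inE ?split_lshift ?split_rshift.
by move=> h; apply/setP => j; rewrite !inE; case: split_ordP => a ->; rewrite inE.
Qed.

Lemma card_join_sets p : #|join_sets p| = (#|p.1| + #|p.2|)%N.
Proof.
rewrite -!sum1_card big_mkcond big_split_ord /=.
rewrite [in RHS](big_mkcond (mem p.1)) [in RHS](big_mkcond (mem p.2)).
by congr addn; apply: eq_bigr => j _; rewrite !inE ?split_lshift ?split_rshift.
Qed.

Lemma prod_join_sets p :
  \prod_(j in join_sets p) 'X_j
  = (\prod_(a in p.1) 'X_(lshift l a)) * \prod_(b in p.2) 'X_(rshift k b)
  :> {mpoly R[k + l]}.
Proof.
rewrite big_mkcond big_split_ord /=.
rewrite [in RHS](big_mkcond (mem p.1)) [in RHS](big_mkcond (mem p.2)).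
by congr (_ * _); apply: eq_bigr => j _; rewrite !inE ?split_lshift ?split_rshift.
Qed.

Lemma mesymD (i : nat) :
  mesym (k + l) R i
  = \sum_(a < i.+1) mesym_on (@lshift k l) a * mesym_on (@rshift k l) (i - a).
Proof.
rewrite sum_convolution /mesym (reindex join_sets); last exact: onW_bij join_sets_bij.
by apply: eq_big => [p | p _]; rewrite ?card_join_sets ?prod_join_sets.
Qed.

End ElementarySymmetricSplit.

Section PontrjaginModel.
Variables (R : comNzRingType) (k : nat).

(* [pclass (~~ odd n) side] with [k = n./2] is [pont n side] up to conversion;
   [sq] says whether the top generator enters squared. *)
Definition pclass (sq : bool) (side : 'I_k -> 'I_(k + k)) (i : nat) : {mpoly R[k + k]} :=
  if i == 0%N then 1 else
  \sum_(j < k | j.+1 == i) (if sq && (j.+1 == k) then 'X_(side j) ^+ 2 else 'X_(side j)).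

Definition pclass_sum (sq : bool) (i : nat) : {mpoly R[k + k]} :=
  \sum_(a < i.+1) pclass sq (@lshift k k) a * pclass sq (@rshift k k) (i - a).

Definition top_exp (sq : bool) (j : 'I_k) : nat := if sq && (j.+1 == k) then 2 else 1.

Definition sq_tuple (sq : bool) : (k + k).-tuple {mpoly R[k + k]} :=
  [tuple 'X_j ^+ (match split j with inl a | inr a => top_exp sq a end) | j < k + k].

Definition mesym_tuple : (k + k).-tuple {mpoly R[k + k]} :=
  [tuple match split j with
         | inl a => mesym_on R (@lshift k k) a.+1
         | inr b => mesym_on R (@rshift k k) b.+1 end | j < k + k].

Lemma pclass_sq_comp sq side (t : (k + k).-tuple {mpoly R[k + k]}) :
    (forall j, tnth t (side j) = 'X_(side j) ^+ top_exp sq j) ->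
  forall a, pclass sq side a = pclass false side a \mPo t.
Proof.
move=> t_side a; rewrite /pclass; case: eqP => _; first by rewrite comp_mpoly1.
rewrite raddf_sum /=; apply: eq_bigr => j _.
by rewrite comp_mpolyXU -tnth_nth t_side /top_exp; case: ifP.
Qed.

Lemma pclass_mesym_comp side (t : (k + k).-tuple {mpoly R[k + k]}) :
    (forall j, tnth t (side j) = mesym_on R side j.+1) ->
  forall a, pclass false side a \mPo t = mesym_on R side a.
Proof.
move=> t_side [|a]; first by rewrite comp_mpoly1 mesym_on0.
rewrite raddf_sum /=.
under eq_bigr do rewrite comp_mpolyXU -tnth_nth t_side.
have [lt_ka | le_ak] := ltnP k a.+1.
  rewrite big_pred0 ?mesym_on_geqnE // => j.
  by rewrite ltn_eqF // (leq_ltn_trans (ltn_ord j)).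
by rewrite (big_pred1 (Ordinal le_ak)) // => j; rewrite eqSS.
Qed.

Lemma pclass_sum_sq_comp sq i : pclass_sum sq i = pclass_sum false i \mPo sq_tuple sq.
Proof.
rewrite raddf_sum /=; apply: eq_bigr => a _.
by rewrite rmorphM /= -!(pclass_sq_comp (sq := sq)) // => j;
  rewrite tnth_mktuple ?split_lshift ?split_rshift.
Qed.

Lemma pclass_sum_mesym_comp i : pclass_sum false i \mPo mesym_tuple = mesym (k + k) R i.
Proof.
rewrite mesymD raddf_sum /=; apply: eq_bigr => a _.
by rewrite rmorphM /= !pclass_mesym_comp // => j;
  rewrite tnth_mktuple ?split_lshift ?split_rshift.
Qed.

Lemma pclass_sum_indep sq (p : {mpoly R[k + k]}) :
  p \mPo [tuple pclass_sum sq i.+1 | i < k + k] = 0 -> p = 0.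
Proof.
have -> : [tuple pclass_sum sq i.+1 | i < k + k]
    = [tuple tnth [tuple pclass_sum false i.+1 | i < k + k] i \mPo sq_tuple sq | i < k + k].
  by apply: eq_mktuple => i; rewrite tnth_mktuple pclass_sum_sq_comp.
rewrite -comp_mpolyA => /comp_mpoly_powX_eq0 p_free0.
have {p_free0} : p \mPo [tuple pclass_sum false i.+1 | i < k + k] = 0.
  by apply: p_free0 => j; case: split => a; rewrite /top_exp; case: ifP.
move=> /(congr1 (comp_mpoly mesym_tuple)); rewrite comp_mpolyA comp_mpoly0.
have -> : [tuple tnth [tuple pclass_sum false i.+1 | i < k + k] i \mPo mesym_tuple | i < k + k]
    = [tuple mesym (k + k) R i.+1 | i < k + k].
  by apply: eq_mktuple => i; rewrite tnth_mktuple pclass_sum_mesym_comp.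
exact: msym_fundamental_un0.
Qed.

End PontrjaginModel.

Theorem lemma4p3 (n : nat) (hn : (1 <= n)%N) :
  alg_indep [tuple pont_sum n i.+1 | i < n - odd n].
Proof.
have -> : (n - odd n = n./2 + n./2)%N.
  by rewrite addnn -[n in (n - _)%N]odd_double_half addKn.
exact: (@pclass_sum_indep rat n./2 (~~ odd n)).
Qed.
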